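(* Every admissible Kähler class $\Omega_{\mathbf r}$ on a KS orbifold $(S_{\mathbf n},\Delta_{\mathbf m})$ contains an admissible extremal Kähler metric whose scalar curvature is an affine-linear function of $\mathfrak z$. This metric has constant scalar curvature (which is then positive) if and only if $\alpha_0\beta_1-\alpha_1\beta_0=0$. Here, for $r=0,1$, - $\alpha_r=\int_{-1}^1t^rp_c(t)\,dt$; - $\beta_r=\int_{-1}^1\bigl(r_1s_1(1+r_2t)+r_2s_2(1+r_1t)\bigr)t^r\,dt+(-1)^r\frac{p_c(-1)}{m_\infty}+\frac{p_c(1)}{m_0}$; with $s_i=2/n_i$. Equivalently, the condition is $f(r_1,r_2)=0$, where $f(r_1,r_2)=9(m_0-m_\infty)n_1n_2-6(m_0+m_\infty)n_1n_2(r_1+r_2)+6(m_0-m_\infty)n_1n_2r_1r_2+3n_2(4m_0m_\infty-n_1(m_0-m_\infty))r_1^2+3n_1(4m_0m_\infty-n_2(m_0-m_\infty))r_2^2-(4m_0m_\infty(n_1+n_2)-3(m_0-m_\infty)n_1n_2)r_1^2r_2^2$.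
   Context: Setup. $S_{\mathbf n}=\mathbb P(\mathbb 1\oplus\mathcal O(n_1,n_2))\to\mathbb{CP}^1\times\mathbb{CP}^1$ with $n_1,n_2\in\mathbb Z\setminus\{0\}$. The KS orbifold $(S_{\mathbf n},\Delta_{\mathbf m})$, with $m_0,m_\infty\in\mathbb Z^+$, has cyclic isotropy $\mathbb Z_{m_0}$ along the zero section $e_0$ and $\mathbb Z_{m_\infty}$ along the infinity section $e_\infty$. Cohomology. Let $x_1,x_2$ be the pullbacks of the generators of $H^2$ of the two $\mathbb{CP}^1$ factors, and $x_3$ the Poincaré dual of $e_\infty$. Parameters. Fix reals $r_1,r_2$ with $0<|r_i|<1$ and $r_in_i>0$, put $p_c(t)=(1+r_1t)(1+r_2t)$, and define $\Omega_{\mathbf r}/2\pi=\frac{n_1(1+r_1)}{r_1}x_1+\frac{n_2(1+r_2)}{r_2}x_2+2x_3$. Admissible metric. An admissible metric in $\Omega_{\mathbf r}$ is $g=\sum_i\frac{1+r_i\mathfrak z}{r_i}g_i+\frac{d\mathfrak z^2}{\Theta}+\Theta\theta^2$, where: - $g_i$ is a metric on $\mathbb{CP}^1$ with $\pm g_i>0$ and scalar curvature $2s_i=4/n_i$; - $\mathfrak z$ is the fiberwise moment map with $e_0=\{\mathfrak z=1\}$ and $e_\infty=\{\mathfrak z=-1\}$; - $d\theta=\omega_1+\omega_2$; - $\Theta=F/p_c$, with $F>0$ on $(-1,1)$, $F(\pm1)=0$, $F'(-1)=2p_c(-1)/m_\infty$ and $F'(1)=-2p_c(1)/m_0$. Its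 scalar curvature is $\frac{2s_1r_1}{1+r_1\mathfrak z}+\frac{2s_2r_2}{1+r_2\mathfrak z}-\frac{F''(\mathfrak z)}{p_c(\mathfrak z)}$. *)

From Stdlib Require Import Reals ZArith.
From Coquelicot Require Import Coquelicot.
Open Scope R_scope.

Definition p_c (r1 r2 t : R) : R := (1 + r1 * t) * (1 + r2 * t).

(* s_i = 2 / n_i  (so that g_i has scalar curvature 2 s_i = 4 / n_i) *)
Definition s_i (n : Z) : R := 2 / IZR n.

(* Admissible profile data for an admissible metric in Omega_r on the
   KS orbifold (S_n, Delta_m): the function F on the moment interval. *)
Definition admissible_F (r1 r2 : R) (m0 minf : nat) (F : R -> R) : Prop :=
  (forall k x, ex_derive_n F k x) /\
  (forall z, -1 < z < 1 -> 0 < F z) /\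
  F (-1) = 0 /\ F 1 = 0 /\
  Derive F (-1) = 2 * p_c r1 r2 (-1) / INR minf /\
  Derive F 1 = - 2 * p_c r1 r2 1 / INR m0.

Definition scalF (n1 n2 : Z) (r1 r2 : R) (F : R -> R) (z : R) : R :=
  2 * s_i n1 * r1 / (1 + r1 * z) + 2 * s_i n2 * r2 / (1 + r2 * z)
  - Derive_n F 2 z / p_c r1 r2 z.

Definition scal_affine (n1 n2 : Z) (r1 r2 : R) (F : R -> R) : Prop :=
  exists A B : R, forall z, -1 <= z <= 1 -> scalF n1 n2 r1 r2 F z = A * z + B.

Definition scal_constant (n1 n2 : Z) (r1 r2 : R) (F : R -> R) : Prop :=
  forall z w, -1 <= z <= 1 -> -1 <= w <= 1 ->
    scalF n1 n2 r1 r2 F z = scalF n1 n2 r1 r2 F w.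

Definition alpha (r1 r2 : R) (k : nat) : R :=
  RInt (fun t => t ^ k * p_c r1 r2 t) (-1) 1.

Definition beta (n1 n2 : Z) (r1 r2 : R) (m0 minf : nat) (k : nat) : R :=
  RInt (fun t => (r1 * s_i n1 * (1 + r2 * t) + r2 * s_i n2 * (1 + r1 * t)) * t ^ k)
       (-1) 1
  + (-1) ^ k * p_c r1 r2 (-1) / INR minf + p_c r1 r2 1 / INR m0.

Definition f_poly (n1 n2 : Z) (m0 minf : nat) (r1 r2 : R) : R :=
  let N1 := IZR n1 in let N2 := IZR n2 in
  let M0 := INR m0 in let Mi := INR minf in
  9 * (M0 - Mi) * N1 * N2 - 6 * (M0 + Mi) * N1 * N2 * (r1 + r2)
  + 6 * (M0 - Mi) * N1 * N2 * r1 * r2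
  + 3 * N2 * (4 * M0 * Mi - N1 * (M0 - Mi)) * r1 ^ 2
  + 3 * N1 * (4 * M0 * Mi - N2 * (M0 - Mi)) * r2 ^ 2
  - (4 * M0 * Mi * (N1 + N2) - 3 * (M0 - Mi) * N1 * N2) * r1 ^ 2 * r2 ^ 2.

From Stdlib Require Import Reals ZArith Lra Psatz Lia.
From Coquelicot Require Import Coquelicot.
Open Scope R_scope.

(* Integrating [F'' = p_c (2 s1 r1 / (1 + r1 z) + 2 s2 r2 / (1 + r2 z) - A z - B)] twice from
   [z = -1] makes the scalar curvature equal to [A z + B]; the two remaining boundary
   conditions at [z = 1] form a linear system for [(A, B)] whose matrix is the Gram matrix
   of [1, z] for the weight [p_c > 0], hence is invertible.  The metric is cscK iff [A = 0],
   i.e. iff [alpha0 beta1 = alpha1 beta0], and then [B = 2 beta0 / alpha0 > 0].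
   [F > 0] inside because [F'' / p_c] is convex: an interior value [F w <= 0] would make [F']
   go down, up and down again, so [F''] would be negative, nonnegative and negative at three
   increasing points. *)

Lemma Derive_n_Sn (f : R -> R) n x : Derive_n f (S n) x = Derive_n (Derive f) n x.
Proof.
revert x; induction n as [|n IH]; intro x; [reflexivity|].
simpl; apply Derive_ext; exact IH.
Qed.

Lemma smooth_of_is_derive (f g : R -> R) :
  (forall x, is_derive f x (g x)) -> (forall k x, ex_derive_n g k x) ->
  forall k x, ex_derive_n f k x.
Proof.
intros Hf Hg [|[|k]] x; [exact I | exists (g x); apply Hf |].
apply ex_derive_ext with (f := Derive_n g k); [|exact (Hg (S k) x)].
intro t; rewrite Derive_n_Sn; apply Derive_n_ext; intro u.
symmetry; apply is_derive_unique, Hf.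
Qed.

Lemma Derive_n_2_of_is_derive (f f1 f2 : R -> R) x :
  (forall x, is_derive f x (f1 x)) -> (forall x, is_derive f1 x (f2 x)) ->
  Derive_n f 2 x = f2 x.
Proof.
intros Hf Hf1; simpl.
rewrite (Derive_ext _ f1); [apply is_derive_unique, Hf1|].
intro t; apply is_derive_unique, Hf.
Qed.

Lemma RInt_antiderivative (f G : R -> R) a b :
  (forall x, is_derive G x (f x)) -> (forall x, ex_derive f x) ->
  RInt f a b = G b - G a.
Proof.
intros HG Hf; apply is_RInt_unique.
exact (is_RInt_derive G f a b (fun x _ => HG x)
  (fun x _ => ex_derive_continuous (K := R_AbsRing) (V := R_NormedModule) f x (Hf x))).
Qed.

Lemma mean_value (f df : R -> R) a b : a < b -> (forall x, is_derive f x (df x)) ->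
  exists c, a <= c <= b /\ f b - f a = df c * (b - a).
Proof.
intros hab Hf.
destruct (MVT_gen f a b df) as [c [hc e]]; [intros; apply Hf | |].
- intros x _; apply continuity_pt_filterlim.
  exact (ex_derive_continuous (K := R_AbsRing) (V := R_NormedModule) f x (ex_intro _ _ (Hf x))).
- rewrite Rmin_left, Rmax_right in hc by lra; eauto.
Qed.

Lemma pos_right_of_root (F : R -> R) x l z :
  is_derive F x l -> 0 < l -> F x = 0 -> x < z -> exists y, x < y < z /\ 0 < F y.
Proof.
intros HF hl hFx hxz; apply is_derive_Reals in HF.
destruct (HF (l / 2) ltac:(lra)) as [[d hd] Hd]; simpl in Hd.
set (h := Rmin (d / 2) ((z - x) / 2)).
assert (hh : 0 < h) by (apply Rmin_pos; lra).
assert (h1 : h <= d / 2) by apply Rmin_l.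
assert (h2 : h <= (z - x) / 2) by apply Rmin_r.
specialize (Hd h ltac:(lra) ltac:(rewrite Rabs_right; lra)).
rewrite hFx, Rminus_0_r in Hd; apply Rabs_def2 in Hd.
exists (x + h); split; [lra|].
assert (0 < F (x + h) / h) by lra.
replace (F (x + h)) with (F (x + h) / h * h) by (field; lra); nra.
Qed.

Lemma pos_between_roots (F F1 F2 : R -> R) a b :
  (forall x, is_derive F x (F1 x)) -> (forall x, is_derive F1 x (F2 x)) ->
  F a = 0 -> F b = 0 -> 0 < F1 a -> F1 b < 0 ->
  (forall x y z, a <= x -> x < y -> y < z -> z <= b -> F2 x < 0 -> F2 z < 0 -> F2 y < 0) ->
  forall w, a < w < b -> 0 < F w.
Proof.
intros HF HF1 Fa Fb F1a F1b Hneg w hw.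
destruct (Rlt_or_le 0 (F w)) as [|Fw]; [assumption | exfalso].
destruct (pos_right_of_root F a (F1 a) w (HF a) F1a Fa ltac:(lra)) as [y [hy Fy]].
destruct (mean_value F F1 y w ltac:(lra) HF) as [u [hu eu]].
destruct (mean_value F F1 w b ltac:(lra) HF) as [v [hv ev]].
assert (F1u : F1 u < 0) by nra.
assert (F1v : 0 <= F1 v) by nra.
assert (huv : u < v) by (destruct (Req_dec u v); [subst; lra | lra]).
assert (hvb : v < b) by (destruct (Req_dec v b); [subst; lra | lra]).
destruct (mean_value F1 F2 a u ltac:(lra) HF1) as [x1 [hx1 e1]].
destruct (mean_value F1 F2 u v huv HF1) as [x2 [hx2 e2]].
destruct (mean_value F1 F2 v b hvb HF1) as [x3 [hx3 e3]].
assert (F2x1 : F2 x1 < 0) by nra.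
assert (F2x2 : 0 < F2 x2) by nra.
assert (F2x3 : F2 x3 < 0) by nra.
assert (x1 < x2) by (destruct (Req_dec x1 x2); [subst; lra | lra]).
assert (x2 < x3) by (destruct (Req_dec x2 x3); [subst; lra | lra]).
specialize (Hneg x1 x2 x3 ltac:(lra) ltac:(lra) ltac:(lra) ltac:(lra) F2x1 F2x3); lra.
Qed.

(* Three-point (chord) form of convexity, cleared of denominators. *)
Definition convex_on (a b : R) (g : R -> R) : Prop :=
  forall x y z, a <= x -> x < y -> y < z -> z <= b ->
    g y * (z - x) <= g x * (z - y) + g z * (y - x).

Lemma convex_on_neg a b g x y z : convex_on a b g ->
  a <= x -> x < y -> y < z -> z <= b -> g x < 0 -> g z < 0 -> g y < 0.
Proof. intros Hg hx hxy hyz hz gx gz; specialize (Hg x y z hx hxy hyz hz); nra. Qed.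

Lemma convex_on_plus a b f g :
  convex_on a b f -> convex_on a b g -> convex_on a b (fun t => f t + g t).
Proof.
intros Hf Hg x y z hx hxy hyz hz.
specialize (Hf x y z hx hxy hyz hz); specialize (Hg x y z hx hxy hyz hz); lra.
Qed.

Lemma convex_on_sub_affine a b g A B :
  convex_on a b g -> convex_on a b (fun t => g t - (A * t + B)).
Proof.
intros Hg x y z hx hxy hyz hz; specialize (Hg x y z hx hxy hyz hz).
assert ((A * y + B) * (z - x) = (A * x + B) * (z - y) + (A * z + B) * (y - x)) by ring.
lra.
Qed.

Lemma convex_on_inv_affine a b c r : 0 <= c ->
  (forall t, a <= t <= b -> 0 < 1 + r * t) -> convex_on a b (fun t => c / (1 + r * t)).
Proof.
intros hc Hpos x y z hx hxy hyz hz.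
assert (px := Hpos x ltac:(lra)); assert (py := Hpos y ltac:(lra)).
assert (pz := Hpos z ltac:(lra)).
assert (E : c / (1 + r * x) * (z - y) + c / (1 + r * z) * (y - x) - c / (1 + r * y) * (z - x)
  = c * (r * r) * ((y - x) * (z - y) * (z - x)) / ((1 + r * x) * (1 + r * y) * (1 + r * z)))
  by (field; lra).
assert (0 <= c * (r * r) * ((y - x) * (z - y) * (z - x)) / ((1 + r * x) * (1 + r * y) * (1 + r * z))).
{ apply Rdiv_le_0_compat; [|apply Rmult_lt_0_compat; [apply Rmult_lt_0_compat|]; lra].
  apply Rmult_le_pos; [apply Rmult_le_pos; nra|].
  apply Rmult_le_pos; [apply Rmult_le_pos|]; lra. }
lra.
Qed.

Section CubicProfile.

Variables c0 c1 c2 c3 d : R.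

Definition cubic (z : R) : R := c0 + c1 * z + c2 * z ^ 2 + c3 * z ^ 3.
Definition cubic_prim (z : R) : R := c0 * z + c1 * z ^ 2 / 2 + c2 * z ^ 3 / 3 + c3 * z ^ 4 / 4.
Definition cubic_prim2 (z : R) : R :=
  c0 * z ^ 2 / 2 + c1 * z ^ 3 / 6 + c2 * z ^ 4 / 12 + c3 * z ^ 5 / 20.

Definition profile_deriv (z : R) : R := d + cubic_prim z - cubic_prim (-1).
Definition profile (z : R) : R :=
  cubic_prim2 z - cubic_prim2 (-1) + (d - cubic_prim (-1)) * (z + 1).

Lemma is_derive_profile x : is_derive profile x (profile_deriv x).
Proof. unfold profile, profile_deriv, cubic_prim2, cubic_prim; auto_derive; auto; field. Qed.

Lemma is_derive_profile_deriv x : is_derive profile_deriv x (cubic x).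
Proof. unfold profile_deriv, cubic_prim, cubic; auto_derive; auto; field. Qed.

Lemma profile_smooth k x : ex_derive_n profile k x.
Proof.
revert k x; apply (smooth_of_is_derive _ _ is_derive_profile).
apply (smooth_of_is_derive _ _ is_derive_profile_deriv).
apply smooth_of_is_derive with (g := fun z => c1 + 2 * c2 * z + 3 * c3 * z ^ 2).
{ intro x; unfold cubic; auto_derive; auto; field. }
apply smooth_of_is_derive with (g := fun z => 2 * c2 + 6 * c3 * z).
{ intro x; auto_derive; auto; field. }
apply smooth_of_is_derive with (g := fun _ => 6 * c3).
{ intro x; auto_derive; auto; field. }
intros k x; apply ex_derive_n_const.
Qed.

Lemma profile_m1 : profile (-1) = 0.
Proof. unfold profile; ring. Qed.

Lemma profile_deriv_m1 : profile_deriv (-1) = d.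
Proof. unfold profile_deriv; ring. Qed.

End CubicProfile.

Lemma affine_pos_on_unit r z : -1 < r < 1 -> -1 <= z <= 1 -> 0 < 1 + r * z.
Proof. intros hr hz; destruct (Rle_lt_or_eq_dec _ _ (proj1 hz)); [nra | subst; lra]. Qed.

Section ExtremalProfile.

Variables r1 r2 s1 s2 M0 Mi : R.
Hypothesis hr1 : -1 < r1 < 1.
Hypothesis hr2 : -1 < r2 < 1.
Hypothesis hM0 : 0 < M0.
Hypothesis hMi : 0 < Mi.

(* Closed forms of [alpha k] and [beta k] (with [s_i n_j] as [s_j] and [m] as [M]);
   [alpha2] is the second moment of [p_c] on [-1, 1]. *)
Definition alpha0 : R := 2 + 2 * (r1 * r2) / 3.
Definition alpha1 : R := 2 * (r1 + r2) / 3.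
Definition alpha2 : R := 2 / 3 + 2 * (r1 * r2) / 5.
Definition beta0 : R :=
  2 * (r1 * s1 + r2 * s2) + (1 - r1) * (1 - r2) / Mi + (1 + r1) * (1 + r2) / M0.
Definition beta1 : R :=
  2 / 3 * (r1 * r2) * (s1 + s2) - (1 - r1) * (1 - r2) / Mi + (1 + r1) * (1 + r2) / M0.
Definition gram_det : R := alpha0 * alpha2 - alpha1 ^ 2.

(* Cramer's solution of [alpha1 A + alpha0 B = 2 beta0] and [alpha2 A + alpha1 B = 2 beta1]:
   integrating [F'' = p_c (2 s1 r1 / (1 + r1 z) + 2 s2 r2 / (1 + r2 z) - A z - B)] against
   [1] and [1 - z], these are the conditions that [F' 1] and [F 1] take the prescribed values. *)
Definition extremal_A : R := 2 * (alpha0 * beta1 - alpha1 * beta0) / gram_det.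
Definition extremal_B : R := 2 * (alpha2 * beta0 - alpha1 * beta1) / gram_det.

Definition extremal_c0 : R := 2 * (s1 * r1 + s2 * r2) - extremal_B.
Definition extremal_c1 : R := 2 * r1 * r2 * (s1 + s2) - extremal_A - extremal_B * (r1 + r2).
Definition extremal_c2 : R := - (extremal_A * (r1 + r2) + extremal_B * (r1 * r2)).
Definition extremal_c3 : R := - extremal_A * (r1 * r2).

Definition extremal_F : R -> R :=
  profile extremal_c0 extremal_c1 extremal_c2 extremal_c3 (2 * p_c r1 r2 (-1) / Mi).
Definition extremal_F' : R -> R :=
  profile_deriv extremal_c0 extremal_c1 extremal_c2 extremal_c3 (2 * p_c r1 r2 (-1) / Mi).
Definition extremal_F'' : R -> R := cubic extremal_c0 extremal_c1 extremal_c2 extremal_c3.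

Lemma extremal_F''_eq z : extremal_F'' z =
  2 * s1 * r1 * (1 + r2 * z) + 2 * s2 * r2 * (1 + r1 * z)
  - (extremal_A * z + extremal_B) * p_c r1 r2 z.
Proof. unfold extremal_F'', cubic, extremal_c0, extremal_c1, extremal_c2, extremal_c3, p_c; ring. Qed.

Lemma gram_det_pos : 0 < gram_det.
Proof. unfold gram_det, alpha0, alpha1, alpha2; nra. Qed.

Lemma extremal_F_1 : extremal_F 1 = 0.
Proof.
assert (hD := gram_det_pos); revert hD.
unfold extremal_F, profile, cubic_prim2, cubic_prim, extremal_c0, extremal_c1, extremal_c2,
  extremal_c3, extremal_A, extremal_B, gram_det, alpha0, alpha1, alpha2, beta0, beta1, p_c.
intro hD; field; repeat split; lra.
Qed.

Lemma extremal_F'_1 : extremal_F' 1 = - 2 * p_c r1 r2 1 / M0.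
Proof.
assert (hD := gram_det_pos); revert hD.
unfold extremal_F', profile_deriv, cubic_prim, extremal_c0, extremal_c1, extremal_c2,
  extremal_c3, extremal_A, extremal_B, gram_det, alpha0, alpha1, alpha2, beta0, beta1, p_c.
intro hD; field; repeat split; lra.
Qed.

Lemma extremal_F''_factor z : -1 <= z <= 1 -> extremal_F'' z = p_c r1 r2 z *
  (2 * s1 * r1 / (1 + r1 * z) + 2 * s2 * r2 / (1 + r2 * z) - (extremal_A * z + extremal_B)).
Proof.
intro hz; rewrite extremal_F''_eq; unfold p_c.
assert (h1 := affine_pos_on_unit r1 z hr1 hz); assert (h2 := affine_pos_on_unit r2 z hr2 hz).
field; lra.
Qed.

(* [F''] is [p_c > 0] times a convex function, so [{F'' < 0}] is an interval. *)
Lemma extremal_F_pos : 0 <= s1 * r1 -> 0 <= s2 * r2 -> forall z, -1 < z < 1 -> 0 < extremal_F z.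
Proof.
intros hs1 hs2.
assert (hpc : forall z, -1 <= z <= 1 -> 0 < p_c r1 r2 z).
{ intros z hz; apply Rmult_lt_0_compat; apply affine_pos_on_unit; assumption. }
apply (pos_between_roots _ extremal_F' extremal_F'').
- apply is_derive_profile.
- apply is_derive_profile_deriv.
- apply profile_m1.
- apply extremal_F_1.
- unfold extremal_F'; rewrite profile_deriv_m1.
  apply Rdiv_lt_0_compat; [assert (hp := hpc (-1) ltac:(lra)); lra | exact hMi].
- rewrite extremal_F'_1; assert (hp := hpc 1 ltac:(lra)).
  replace (- 2 * p_c r1 r2 1 / M0) with (- (2 * p_c r1 r2 1 / M0)) by (field; lra).
  apply Ropp_lt_gt_0_contravar, Rdiv_lt_0_compat; lra.
- intros x y z hx hxy hyz hz Fx Fz.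
  assert (hconv : convex_on (-1) 1 (fun t => 2 * s1 * r1 / (1 + r1 * t)
      + 2 * s2 * r2 / (1 + r2 * t) - (extremal_A * t + extremal_B))).
  { apply convex_on_sub_affine, convex_on_plus; apply convex_on_inv_affine;
      try lra; intros t ht; apply affine_pos_on_unit; assumption. }
  rewrite extremal_F''_factor in Fx, Fz |- * by lra.
  assert (px := hpc x ltac:(lra)); assert (py := hpc y ltac:(lra)).
  assert (pz := hpc z ltac:(lra)).
  set (g := fun t => _) in hconv.
  change (p_c r1 r2 x * g x < 0) in Fx; change (p_c r1 r2 z * g z < 0) in Fz.
  change (p_c r1 r2 y * g y < 0).
  assert (gy : g y < 0) by (apply (convex_on_neg (-1) 1 g x y z); auto; nra).
  nra.
Qed.

Lemma extremal_A_eq0 : extremal_A = 0 <-> alpha0 * beta1 - alpha1 * beta0 = 0.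
Proof.
assert (hD := gram_det_pos).
assert (E : alpha0 * beta1 - alpha1 * beta0 = extremal_A * gram_det / 2)
  by (unfold extremal_A; field; lra).
rewrite E; split; intro h; [rewrite h; lra | nra].
Qed.

Lemma extremal_B_pos : 0 <= s1 * r1 -> 0 <= s2 * r2 ->
  alpha0 * beta1 - alpha1 * beta0 = 0 -> 0 < extremal_B.
Proof.
intros hs1 hs2 hdet.
assert (hD := gram_det_pos).
assert (ha0 : 0 < alpha0) by (unfold alpha0; nra).
assert (hb0 : 0 < beta0).
{ unfold beta0.
  assert (0 < (1 - r1) * (1 - r2) / Mi) by (apply Rdiv_lt_0_compat; nra).
  assert (0 < (1 + r1) * (1 + r2) / M0) by (apply Rdiv_lt_0_compat; nra).
  nra. }
assert (E : extremal_B * alpha0 = 2 * beta0).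
{ unfold extremal_B.
  replace (2 * (alpha2 * beta0 - alpha1 * beta1) / gram_det * alpha0)
    with ((2 * beta0 * gram_det - 2 * alpha1 * (alpha0 * beta1 - alpha1 * beta0)) / gram_det)
    by (unfold gram_det in *; field; lra).
  rewrite hdet; field; lra. }
nra.
Qed.

End ExtremalProfile.

Lemma alpha_0_closed r1 r2 : alpha r1 r2 0 = alpha0 r1 r2.
Proof.
unfold alpha, alpha0, p_c.
rewrite (RInt_antiderivative _ (fun t => t + (r1 + r2) * t ^ 2 / 2 + r1 * r2 * t ^ 3 / 3));
  [field | intro x; auto_derive; auto; field | intro x; auto_derive; auto].
Qed.

Lemma alpha_1_closed r1 r2 : alpha r1 r2 1 = alpha1 r1 r2.
Proof.
unfold alpha, alpha1, p_c.
rewrite (RInt_antiderivative _ (fun t => t ^ 2 / 2 + (r1 + r2) * t ^ 3 / 3 + r1 * r2 * t ^ 4 / 4));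
  [field | intro x; auto_derive; auto; field | intro x; auto_derive; auto].
Qed.

Lemma beta_0_closed n1 n2 r1 r2 m0 minf : INR m0 <> 0 -> INR minf <> 0 ->
  beta n1 n2 r1 r2 m0 minf 0 = beta0 r1 r2 (s_i n1) (s_i n2) (INR m0) (INR minf).
Proof.
intros h0 hi; unfold beta, beta0, p_c.
rewrite (RInt_antiderivative _ (fun t => (r1 * s_i n1 + r2 * s_i n2) * t
   + r1 * r2 * (s_i n1 + s_i n2) * t ^ 2 / 2));
  [simpl; field; auto | intro x; auto_derive; auto; field | intro x; auto_derive; auto].
Qed.

Lemma beta_1_closed n1 n2 r1 r2 m0 minf : INR m0 <> 0 -> INR minf <> 0 ->
  beta n1 n2 r1 r2 m0 minf 1 = beta1 r1 r2 (s_i n1) (s_i n2) (INR m0) (INR minf).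
Proof.
intros h0 hi; unfold beta, beta1, p_c.
rewrite (RInt_antiderivative _ (fun t => (r1 * s_i n1 + r2 * s_i n2) * t ^ 2 / 2
   + r1 * r2 * (s_i n1 + s_i n2) * t ^ 3 / 3));
  [simpl; field; auto | intro x; auto_derive; auto; field | intro x; auto_derive; auto].
Qed.

Lemma alpha_beta_det_eq0_iff_f_poly n1 n2 m0 minf r1 r2 :
  IZR n1 <> 0 -> IZR n2 <> 0 -> INR m0 <> 0 -> INR minf <> 0 ->
  alpha0 r1 r2 * beta1 r1 r2 (s_i n1) (s_i n2) (INR m0) (INR minf)
  - alpha1 r1 r2 * beta0 r1 r2 (s_i n1) (s_i n2) (INR m0) (INR minf) = 0
  <-> f_poly n1 n2 m0 minf r1 r2 = 0.
Proof.
intros h1 h2 h0 hi.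
assert (hK : 9 * IZR n1 * IZR n2 * INR m0 * INR minf <> 0)
  by (repeat apply Rmult_integral_contrapositive_currified; lra).
assert (E : (alpha0 r1 r2 * beta1 r1 r2 (s_i n1) (s_i n2) (INR m0) (INR minf)
  - alpha1 r1 r2 * beta0 r1 r2 (s_i n1) (s_i n2) (INR m0) (INR minf))
  * (9 * IZR n1 * IZR n2 * INR m0 * INR minf) = - 2 * f_poly n1 n2 m0 minf r1 r2)
  by (unfold alpha0, alpha1, beta0, beta1, f_poly, s_i; field; auto).
split; intro h; rewrite h in E; [lra |].
destruct (Rmult_integral _ _ (eq_trans E (Rmult_0_r _))); [assumption | contradiction].
Qed.

Lemma s_i_mul_pos n r : 0 < r * IZR n -> 0 < s_i n * r.
Proof.
intro h; unfold s_i.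
assert (hn : IZR n <> 0) by (intro E; rewrite E in h; lra).
replace (2 / IZR n * r) with (2 * (r * IZR n) / (IZR n * IZR n)) by (field; auto).
apply Rdiv_lt_0_compat; [lra | nra].
Qed.

Lemma scalF_extremal n1 n2 r1 r2 M0 Mi z : -1 < r1 < 1 -> -1 < r2 < 1 -> -1 <= z <= 1 ->
  scalF n1 n2 r1 r2 (extremal_F r1 r2 (s_i n1) (s_i n2) M0 Mi) z
  = extremal_A r1 r2 (s_i n1) (s_i n2) M0 Mi * z + extremal_B r1 r2 (s_i n1) (s_i n2) M0 Mi.
Proof.
intros hr1 hr2 hz; unfold scalF, extremal_F.
rewrite (Derive_n_2_of_is_derive _ _ _ _ (is_derive_profile _ _ _ _ _)
  (is_derive_profile_deriv _ _ _ _ _)).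
fold (extremal_F'' r1 r2 (s_i n1) (s_i n2) M0 Mi z); rewrite extremal_F''_factor by assumption.
assert (h1 := affine_pos_on_unit r1 z hr1 hz); assert (h2 := affine_pos_on_unit r2 z hr2 hz).
unfold p_c; field; lra.
Qed.

Lemma extremal_F_admissible r1 r2 s1 s2 m0 minf :
  -1 < r1 < 1 -> -1 < r2 < 1 -> (0 < m0)%nat -> (0 < minf)%nat ->
  0 <= s1 * r1 -> 0 <= s2 * r2 ->
  admissible_F r1 r2 m0 minf (extremal_F r1 r2 s1 s2 (INR m0) (INR minf)).
Proof.
intros hr1 hr2 hm0 hmi hs1 hs2.
assert (hM0 : 0 < INR m0) by (apply lt_0_INR; lia).
assert (hMi : 0 < INR minf) by (apply lt_0_INR; lia).
assert (F' : forall x, Derive (extremal_F r1 r2 s1 s2 (INR m0) (INR minf)) x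
                       = extremal_F' r1 r2 s1 s2 (INR m0) (INR minf) x)
  by (intro x; apply is_derive_unique, is_derive_profile).
split; [|split; [|split; [|split; [|split]]]].
- apply profile_smooth.
- exact (extremal_F_pos _ _ _ _ _ _ hr1 hr2 hM0 hMi hs1 hs2).
- apply profile_m1.
- exact (extremal_F_1 _ _ _ _ _ _ hr1 hr2 hM0 hMi).
- rewrite F'; apply profile_deriv_m1.
- rewrite F'; exact (extremal_F'_1 _ _ _ _ _ _ hr1 hr2 hM0 hMi).
Qed.

Lemma scal_constant_iff_slope_eq0 n1 n2 r1 r2 F A B :
  (forall z, -1 <= z <= 1 -> scalF n1 n2 r1 r2 F z = A * z + B) ->
  (scal_constant n1 n2 r1 r2 F <-> A = 0).
Proof.
intro HS; split.
- intro h; specialize (h (-1) 1 ltac:(lra) ltac:(lra)); rewrite !HS in h by lra; lra.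
- intros hA z w hz hw; rewrite !HS, hA by assumption; ring.
Qed.

Theorem mainTheorem12 (n1 n2 : Z) (m0 minf : nat) (r1 r2 : R) :
  n1 <> 0%Z -> n2 <> 0%Z -> (0 < m0)%nat -> (0 < minf)%nat ->
  0 < Rabs r1 < 1 -> 0 < Rabs r2 < 1 ->
  0 < r1 * IZR n1 -> 0 < r2 * IZR n2 ->
  exists F : R -> R,
    admissible_F r1 r2 m0 minf F /\
    scal_affine n1 n2 r1 r2 F /\
    (scal_constant n1 n2 r1 r2 F <->
       alpha r1 r2 0 * beta n1 n2 r1 r2 m0 minf 1
       - alpha r1 r2 1 * beta n1 n2 r1 r2 m0 minf 0 = 0) /\
    (scal_constant n1 n2 r1 r2 F ->
       forall z, -1 <= z <= 1 -> 0 < scalF n1 n2 r1 r2 F z) /\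
    (alpha r1 r2 0 * beta n1 n2 r1 r2 m0 minf 1
       - alpha r1 r2 1 * beta n1 n2 r1 r2 m0 minf 0 = 0 <->
     f_poly n1 n2 m0 minf r1 r2 = 0).
Proof.
intros hn1 hn2 hm0 hmi [_ hr1] [_ hr2] hp1 hp2.
assert (hr1' : -1 < r1 < 1) by (apply Rabs_def2 in hr1; lra).
assert (hr2' : -1 < r2 < 1) by (apply Rabs_def2 in hr2; lra).
assert (hM0 : 0 < INR m0) by (apply lt_0_INR; lia).
assert (hMi : 0 < INR minf) by (apply lt_0_INR; lia).
assert (hs1 := s_i_mul_pos n1 r1 hp1); assert (hs2 := s_i_mul_pos n2 r2 hp2).
set (F := extremal_F r1 r2 (s_i n1) (s_i n2) (INR m0) (INR minf)).
set (A := extremal_A r1 r2 (s_i n1) (s_i n2) (INR m0) (INR minf)).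
set (B := extremal_B r1 r2 (s_i n1) (s_i n2) (INR m0) (INR minf)).
assert (HS : forall z, -1 <= z <= 1 -> scalF n1 n2 r1 r2 F z = A * z + B)
  by (intros z; apply scalF_extremal; assumption).
rewrite alpha_0_closed, alpha_1_closed, beta_0_closed, beta_1_closed by lra.
assert (HA := extremal_A_eq0 r1 r2 (s_i n1) (s_i n2) (INR m0) (INR minf) hr1' hr2').
exists F; rewrite (scal_constant_iff_slope_eq0 _ _ _ _ _ _ _ HS).
split; [apply extremal_F_admissible; auto; lra |].
split; [exists A, B; exact HS |].
split; [exact HA |].
split.
- intros hA z hz; rewrite HS, hA, Rmult_0_l, Rplus_0_l by assumption.
  apply (extremal_B_pos _ _ _ _ _ _ hr1' hr2' hM0 hMi); [lra | lra | exact (proj1 HA hA)].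
- apply alpha_beta_det_eq0_iff_f_poly; try apply not_0_IZR; auto; lra.
Qed.
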